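(* Let $(I,\le)$ be a totally ordered set with smallest element $0$, and let $\{G_i,\pi_{ij}\}$ be a direct system of finitely generated groups indexed by $I$ with surjective homomorphisms $\pi_{ij}:G_i\to G_j$ for all $j\ge i$ (with $\pi_{ii}=\mathrm{id}$ and $\pi_{jk}\circ\pi_{ij}=\pi_{ik}$), and let $G_\infty=\varinjlim G_i$. Then for each prime $p$, $\limsup_{i\in I} RG_p(G_i)\le RG_p(G_\infty)$.
   Context: For a group $A$, $d(A)$ is the minimal number of generators and $d_p(A)=d\big(A/[A,A]A^p\big)$. For a finitely generated group $G$, $RG_p(G)=\inf_H\frac{d_p(H)-1}{[G:H]}$, the infimum over normal subgroups $H\trianglelefteq G$ of $p$-power index. The $\limsup$ is taken along the total order of $I$. *)

From mathcomp Require Import all_boot all_order all_algebra.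
From mathcomp Require Import all_classical all_reals ereal.
From Stdlib Require List.
Set Implicit Arguments. Unset Strict Implicit. Unset Printing Implicit Defensive.
Import Order.TTheory GRing.Theory Num.Theory.

Record grp := Grp {
  gcar :> Type;
  gmul : gcar -> gcar -> gcar;
  gone : gcar;
  ginv : gcar -> gcar;
  gmulA : forall x y z, gmul x (gmul y z) = gmul (gmul x y) z;
  gmul1l : forall x, gmul gone x = x;
  gmulVl : forall x, gmul (ginv x) x = gone }.

Section GroupNotions.
Variable G : grp.
Local Notation "x * y" := (gmul x y).

Definition gexp (x : G) (n : nat) : G := iter n (gmul x) (gone G).
Definition gcomm (x y : G) : G := ginv x * (ginv y * (x * y)).

Definition is_subgroup (H : G -> Prop) : Prop :=
  H (gone G) /\ (forall x y, H x -> H y -> H (x * y)) /\ (forall x, H x -> H (ginv x)).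

Definition is_normal (H : G -> Prop) : Prop :=
  is_subgroup H /\ (forall x g, H x -> H (ginv g * (x * g))).

Definition gen (S : G -> Prop) : G -> Prop :=
  fun x => forall K, is_subgroup K -> (forall s, S s -> K s) -> K x.

Definition fin_generated : Prop :=
  exists s : seq G, forall x, gen (fun y => List.In y s) x.

(* H has index n in G: there are exactly n left cosets of H *)
Definition index_is (H : G -> Prop) (n : nat) : Prop :=
  exists f : 'I_n -> G,
    (forall g, exists i, H (ginv (f i) * g)) /\
    (forall i j, H (ginv (f i) * f j) -> i = j).

Definition commpow (p : nat) (H : G -> Prop) : G -> Prop :=
  gen (fun z => (exists x y, H x /\ H y /\ z = gcomm x y) \/
                (exists x, H x /\ z = gexp x p)).

(* d(H/[H,H]H^p) <= k : the quotient H/[H,H]H^p is generated by (the images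
   of) k elements of H, i.e. H is generated by k elements together with
   [H,H]H^p. *)
Definition dp_le (p : nat) (H : G -> Prop) (k : nat) : Prop :=
  exists s : seq G, size s = k /\ (forall x, List.In x s -> H x) /\
    (forall x, H x -> gen (fun y => List.In y s \/ commpow p H y) x).

Local Open Scope ereal_scope.

(* d_p(H) as an extended real (the minimum of the k above; +oo if none) *)
Definition dp {R : realType} (p : nat) (H : G -> Prop) : \bar R :=
  ereal_inf [set (k%:R)%:E | k in [set k : nat | dp_le p H k]].

Definition RG {R : realType} (p : nat) : \bar R :=
  ereal_inf [set x | exists (H : G -> Prop) (k : nat),
     is_normal H /\ index_is H (p ^ k) /\
     x = (dp p H - 1) * ((((p ^ k)%:R : R)^-1)%:E)].

End GroupNotions.

Definition is_hom (G K : grp) (f : G -> K) : Prop :=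
  forall x y, f (gmul x y) = gmul (f x) (f y).

Definition surj_direct_system {d} {I : porderType d} (G : I -> grp)
    (pi : forall i j, G i -> G j) : Prop :=
  (forall i j, (i <= j)%O -> is_hom (pi i j)) /\
  (forall i j, (i <= j)%O -> forall y : G j, exists x, pi i j x = y) /\
  (forall i (x : G i), pi i i x = x) /\
  (forall i j k, (i <= j)%O -> (j <= k)%O -> forall x, pi j k (pi i j x) = pi i k x).

Definition is_direct_limit {d} {I : porderType d} (G : I -> grp)
    (pi : forall i j, G i -> G j) (Ginf : grp) (iota : forall i, G i -> Ginf) : Prop :=
  (forall i, is_hom (iota i)) /\
  (forall i j, (i <= j)%O -> forall x, iota j (pi i j x) = iota i x) /\
  (forall (K : grp) (f : forall i, G i -> K),
     (forall i, is_hom (f i)) ->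
     (forall i j, (i <= j)%O -> forall x, f j (pi i j x) = f i x) ->
     exists u : Ginf -> K, is_hom u /\ (forall i x, u (iota i x) = f i x) /\
       (forall v : Ginf -> K, is_hom v -> (forall i x, v (iota i x) = f i x) ->
          forall y, v y = u y)).

Definition limsup_I {R : realType} {d} {I : porderType d} (a : I -> \bar R) : \bar R :=
  ereal_inf [set ereal_sup [set a j | j in [set j | (i <= j)%O]] | i in [set: I]].

From mathcomp Require Import all_boot all_order all_algebra.
From mathcomp Require Import all_classical all_reals ereal.
From Stdlib Require List.
Set Implicit Arguments. Unset Strict Implicit. Unset Printing Implicit Defensive.
Import Order.TTheory GRing.Theory Num.Theory.

(* Let H be normal of index p^k in G_inf with d_p(H) = m. The limit G_inf is
   the quotient of G_0 by the union of the kernels of the maps pi_0j, so the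
   preimage L of H in G_0 is generated by lifts of m generators of H together
   with [L,L]L^p and that union. Since L has finite index in the finitely
   generated group G_0, it is finitely generated (Schreier), hence finitely
   many elements of the union, and thus a single kernel ker pi_0j for all
   large j, already suffice. Pushing forward along pi_0j, the preimage H_j of
   H in G_j is normal of index p^k with d_p(H_j) <= m, so eventually
   RG_p(G_j) <= (m - 1) / p^k. *)

Lemma In_mem (T : eqType) (s : seq T) x : x \in s -> List.In x s.
Proof. by elim: s => [|y s IHs] //=; rewrite in_cons => /orP[/eqP ->|/IHs]; [left|right]. Qed.

Section GroupLemmas.
Variable G : grp.
Implicit Types (x y z : G) (S K : G -> Prop).
Local Notation "x * y" := (gmul x y).

Lemma gmulKV x y : ginv x * (x * y) = y.
Proof. by rewrite gmulA gmulVl gmul1l. Qed.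

Lemma gmulIl x y z : x * y = x * z -> y = z.
Proof. by move=> e; rewrite -(gmulKV x y) e gmulKV. Qed.

Lemma gmulVr x : x * ginv x = gone G.
Proof.
have e : ginv (ginv x) * ginv x = gone G by rewrite gmulVl.
by rewrite -[x * _]gmul1l -{1}e -!gmulA (gmulA (ginv x)) gmulVl gmul1l gmulVl.
Qed.

Lemma gmul1r x : x * gone G = x.
Proof. by rewrite -(gmulVl x) gmulA gmulVr gmul1l. Qed.

Lemma gmulVK x y : x * (ginv x * y) = y.
Proof. by rewrite gmulA gmulVr gmul1l. Qed.

Lemma ginv_uniq x y : x * y = gone G -> y = ginv x.
Proof. by move=> e; apply: (@gmulIl x); rewrite e gmulVr. Qed.

Lemma ginvK x : ginv (ginv x) = x.
Proof. by symmetry; apply: ginv_uniq; rewrite gmulVl. Qed.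

Lemma ginvM x y : ginv (x * y) = ginv y * ginv x.
Proof. by symmetry; apply: ginv_uniq; rewrite -gmulA gmulVK gmulVr. Qed.

Lemma ginv1 : ginv (gone G) = gone G.
Proof. by symmetry; apply: ginv_uniq; rewrite gmul1r. Qed.

Lemma subgroup1 K : is_subgroup K -> K (gone G).
Proof. by case. Qed.

Lemma subgroupM K x y : is_subgroup K -> K x -> K y -> K (x * y).
Proof. by case=> _ [sKM _]; apply: sKM. Qed.

Lemma subgroupV K x : is_subgroup K -> K x -> K (ginv x).
Proof. by case=> _ [_ sKV]; apply: sKV. Qed.

Lemma subgroupVr K x : is_subgroup K -> K (ginv x) -> K x.
Proof. by move=> sK /(subgroupV sK); rewrite ginvK. Qed.

Lemma subgroupX K x n : is_subgroup K -> K x -> K (gexp x n).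
Proof.
by move=> sK Kx; elim: n => [|n IHn] /=; [apply: subgroup1 | apply: subgroupM].
Qed.

Lemma subgroupR K x y : is_subgroup K -> K x -> K y -> K (gcomm x y).
Proof.
move=> sK Kx Ky; apply: subgroupM (subgroupV sK Kx) _ => //.
by apply: subgroupM (subgroupV sK Ky) _ => //; apply: subgroupM.
Qed.

Lemma mem_gen S x : S x -> gen S x.
Proof. by move=> Sx K _; apply. Qed.

Lemma gen_subG S K : is_subgroup K -> (forall x, S x -> K x) -> forall x, gen S x -> K x.
Proof. by move=> sK SK x; apply. Qed.

Lemma gen_subgroup S : is_subgroup (gen S).
Proof.
split; first by move=> K [].
split=> [x y Sx Sy | x Sx] K sK SK.
  by apply: subgroupM; [| apply: Sx | apply: Sy].
by apply: subgroupV; [| apply: Sx].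
Qed.

Lemma commpow_subG p K : is_subgroup K -> forall x, commpow p K x -> K x.
Proof.
move=> sK; apply: gen_subG => // _ [[x [y [Kx [Ky ->]]]] | [x [Kx ->]]].
  exact: subgroupR.
exact: subgroupX.
Qed.

End GroupLemmas.

Section Homomorphisms.
Variables (G K : grp) (f : G -> K).
Hypothesis f_hom : is_hom f.
Implicit Types (S : G -> Prop) (T : K -> Prop).

Lemma hom1 : f (gone G) = gone K.
Proof. by apply: (@gmulIl _ (f (gone G))); rewrite -f_hom !gmul1r. Qed.

Lemma homV x : f (ginv x) = ginv (f x).
Proof. by apply: ginv_uniq; rewrite -f_hom gmulVr hom1. Qed.

Lemma homX x n : f (gexp x n) = gexp (f x) n.
Proof. by elim: n => [|n IHn] /=; [apply: hom1 | rewrite f_hom IHn]. Qed.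

Lemma homR x y : f (gcomm x y) = gcomm (f x) (f y).
Proof. by rewrite /gcomm !f_hom !homV. Qed.

Lemma preim_subgroup T : is_subgroup T -> is_subgroup (fun x => T (f x)).
Proof.
move=> sT; split; first by rewrite hom1; apply: subgroup1.
split=> [x y Tx Ty | x Tx]; first by rewrite f_hom; apply: subgroupM.
by rewrite homV; apply: subgroupV.
Qed.

Lemma preim_normal T : is_normal T -> is_normal (fun x => T (f x)).
Proof.
case=> sT nT; split; first exact: preim_subgroup.
by move=> x g Tx; rewrite !f_hom homV; apply: nT.
Qed.

Lemma image_subgroup S : is_subgroup S -> is_subgroup (fun y => exists2 x, S x & f x = y).
Proof.
move=> sS; split; first by exists (gone G); [apply: subgroup1 | apply: hom1].
split=> [_ _ [x Sx <-] [y Sy <-] | _ [x Sx <-]].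
  by exists (gmul x y); [apply: subgroupM | apply: f_hom].
by exists (ginv x); [apply: subgroupV | apply: homV].
Qed.

Lemma gen_image S (S' : K -> Prop) :
  (forall y, S' y -> exists2 x, S x & f x = y) ->
  forall y, gen S' y -> exists2 x, gen S x & f x = y.
Proof.
move=> S'S; apply: (gen_subG (image_subgroup (gen_subgroup S))).
by move=> y /S'S [x Sx <-]; exists x => //; apply: mem_gen.
Qed.

Lemma commpow_image p S T : (forall x, S x -> T (f x)) ->
  forall x, commpow p S x -> commpow p T (f x).
Proof.
move=> ST; apply: (gen_subG (preim_subgroup (gen_subgroup _))).
move=> _ [[x [y [Sx [Sy ->]]]] | [x [Sx ->]]]; apply: mem_gen.
  by left; exists (f x), (f y); rewrite homR; split; [apply: ST | split; [apply: ST|]].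
by right; exists (f x); rewrite homX; split; [apply: ST|].
Qed.

Lemma commpow_lift p S T : (forall y, T y -> exists2 x, S x & f x = y) ->
  forall y, commpow p T y -> exists2 x, commpow p S x & f x = y.
Proof.
move=> TS; apply: gen_image => _ [[y1 [y2 [T1 [T2 ->]]]] | [y [Ty ->]]].
  have [[x1 S1 <-] [x2 S2 <-]] := (TS _ T1, TS _ T2).
  by exists (gcomm x1 x2); [left; exists x1, x2 | rewrite homR].
have [x Sx <-] := TS _ Ty.
by exists (gexp x p); [right; exists x | rewrite homX].
Qed.

End Homomorphisms.

Lemma lift_seq (A B : grp) (f : A -> B) :
  (forall y, exists x, f x = y) -> forall s : seq B, exists s', map f s' = s.
Proof.
move=> f_surj; elim=> [|y s [s' <-]]; first by exists [::].
by have [x <-] := f_surj y; exists (x :: s').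
Qed.

Lemma preim_index (A B : grp) (f : A -> B) (H : B -> Prop) (n : nat) :
  is_hom f -> (forall y, exists x, f x = y) -> index_is H n -> index_is (fun x => H (f x)) n.
Proof.
move=> f_hom f_surj [c [c_cover c_inj]].
have [c' c'K] := choice (fun k => f_surj (c k)).
exists c'; split=> [g | k k'] /=.
  by have [k Hk] := c_cover (f g); exists k; rewrite f_hom (homV f_hom) c'K.
by rewrite f_hom (homV f_hom) !c'K; apply: c_inj.
Qed.

Lemma dp_le_image (A B : grp) (f : A -> B) (p m : nat) (L : A -> Prop) (T : B -> Prop) (s : seq A) :
  is_hom f -> (forall x, L x -> T (f x)) -> (forall y, T y -> exists2 x, L x & f x = y) ->
  size s = m -> (forall x, List.In x s -> L x) ->
  (forall x, L x -> gen (fun y => List.In y s \/ commpow p L y \/ f y = gone B) x) ->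
  dp_le p T m.
Proof.
move=> f_hom LT TL sz sL Lgen; exists (map f s); rewrite size_map; split=> //; split.
  by move=> _ /List.in_map_iff [x [<- /sL /LT]].
move=> _ /TL [x /Lgen Lx <-]; move: x Lx.
apply: (gen_subG (preim_subgroup f_hom (gen_subgroup _))) => y [sy | [cy | ->]].
- by apply: mem_gen; left; apply: List.in_map.
- by apply: mem_gen; right; apply: commpow_image cy.
- exact: subgroup1 (gen_subgroup _).
Qed.

Section Quotient.
Variables (A : grp) (N : A -> Prop).
Hypothesis N_normal : is_normal N.
Local Notation "x * y" := (gmul x y).

Let N_sub : is_subgroup N. Proof. by case: N_normal. Qed.

Definition lcoset (a : A) : A -> Prop := fun b => N (ginv a * b).
Definition quot := {C : A -> Prop | exists a, C = lcoset a}.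
Definition qproj (a : A) : quot := exist _ (lcoset a) (ex_intro _ a erefl).
Definition qrepr (z : quot) : A := proj1_sig (cid (proj2_sig z)).

Lemma qreprK z : qproj (qrepr z) = z.
Proof.
rewrite /qrepr; case: z => C hC /=; case: (cid hC) => a /= eC.
by apply: eq_exist; rewrite eC.
Qed.

Lemma qproj_surj z : exists a, z = qproj a.
Proof. by exists (qrepr z); rewrite qreprK. Qed.

Lemma qproj_eq a b : qproj a = qproj b <-> N (ginv a * b).
Proof.
split=> [/(congr1 (fun z => proj1_sig z b)) /= | Nab].
  by rewrite /lcoset gmulVl => ->; apply: subgroup1.
apply: eq_exist; apply: funext => c; apply: propext; rewrite /lcoset; split=> Nc.
  have -> : ginv b * c = ginv (ginv a * b) * (ginv a * c).
    by rewrite ginvM ginvK -gmulA gmulVK.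
  by apply: subgroupM => //; apply: subgroupV.
by rewrite -(gmulVK b c) gmulA; apply: subgroupM.
Qed.

Definition qmul (z w : quot) : quot := qproj (qrepr z * qrepr w).
Definition qinv (z : quot) : quot := qproj (ginv (qrepr z)).
Definition qone : quot := qproj (gone A).

Lemma qprojM a b : qmul (qproj a) (qproj b) = qproj (a * b).
Proof.
apply/qproj_eq; set a' := qrepr _; set b' := qrepr _.
have Na : N (ginv a' * a) by apply/qproj_eq; rewrite qreprK.
have Nb : N (ginv b' * b) by apply/qproj_eq; rewrite qreprK.
have -> : ginv (a' * b') * (a * b) = ginv b' * ((ginv a' * a) * b') * (ginv b' * b).
  by rewrite ginvM -!gmulA gmulVK.
by apply: subgroupM => //; case: N_normal => _; apply.
Qed.

Lemma qprojV a : qinv (qproj a) = qproj (ginv a).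
Proof.
apply/qproj_eq; set a' := qrepr _; rewrite ginvK.
have Na : N (ginv a' * a) by apply/qproj_eq; rewrite qreprK.
have := proj2 N_normal _ (ginv a') (subgroupV N_sub Na).
by rewrite ginvK ginvM ginvK -gmulA gmulVr gmul1r.
Qed.

Lemma qmulA x y z : qmul x (qmul y z) = qmul (qmul x y) z.
Proof.
case: (qproj_surj x) (qproj_surj y) (qproj_surj z) => a -> [b ->] [c ->].
by rewrite !qprojM gmulA.
Qed.

Lemma qmul1l x : qmul qone x = x.
Proof. by case: (qproj_surj x) => a ->; rewrite qprojM gmul1l. Qed.

Lemma qmulVl x : qmul (qinv x) x = qone.
Proof. by case: (qproj_surj x) => a ->; rewrite qprojV qprojM gmulVl. Qed.

Definition quot_grp : grp := Grp qmulA qmul1l qmulVl.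

Lemma qproj_hom : is_hom (qproj : A -> quot_grp).
Proof. by move=> x y; rewrite /= qprojM. Qed.

End Quotient.

Section Schreier.
Variables (A : grp) (gens reps : seq A) (L X : A -> Prop).
Local Notation "x * y" := (gmul x y).
Hypothesis gensP : forall x, gen (fun y => List.In y gens) x.
Hypotheses (L_sub : is_subgroup L) (X_sub : is_subgroup X) (XL : forall x, X x -> L x).
Hypothesis reps_cover : forall g, exists2 c, List.In c reps & L (ginv c * g).

Definition maps_rep_cosets (g : A) :=
  forall c, List.In c reps -> exists2 c', List.In c' reps & X (ginv c' * (g * c)).

Lemma maps_rep_cosetsM g h : maps_rep_cosets g -> maps_rep_cosets h -> maps_rep_cosets (g * h).
Proof.
move=> pg ph c /ph [c1 /pg [c2 rc2 X2] X1]; exists c2 => //.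
have -> : ginv c2 * (g * h * c) = ginv c2 * (g * c1) * (ginv c1 * (h * c)).
  by rewrite -!gmulA gmulVK.
exact: subgroupM.
Qed.

Lemma maps_rep_cosets_all :
  (forall t, List.In t gens -> maps_rep_cosets t /\ maps_rep_cosets (ginv t)) ->
  forall g, maps_rep_cosets g.
Proof.
move=> pgens g.
have sP : is_subgroup (fun g => maps_rep_cosets g /\ maps_rep_cosets (ginv g)).
  split; last split.
  - have p1 : maps_rep_cosets (gone A).
      by move=> c rc; exists c; rewrite // gmul1l gmulVl; apply: subgroup1.
    by rewrite ginv1.
  - move=> x y [px px'] [py py']; split; first exact: maps_rep_cosetsM.
    by rewrite ginvM; apply: maps_rep_cosetsM.
  - by move=> x [px px']; rewrite ginvK.
by have [] := gen_subG sP pgens (gensP g).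
Qed.

(* Schreier's lemma: L is generated by the elements c'^-1 t c and the
   representatives lying in L. *)
Lemma schreier_subG :
  (forall t, List.In t gens -> maps_rep_cosets t /\ maps_rep_cosets (ginv t)) ->
  (forall c, List.In c reps -> L c -> X c) ->
  forall g, L g -> X g.
Proof.
move=> pgens repsX g Lg.
have [c0 rc0 L0] := reps_cover (gone A); rewrite gmul1r in L0.
have [c1 rc1 X1] := maps_rep_cosets_all pgens g rc0.
have L1 : L c1.
  apply: subgroupVr => //.
  have -> : ginv c1 = ginv c1 * (g * c0) * (ginv c0 * ginv g).
    by rewrite -!gmulA gmulVK gmulVr gmul1r.
  exact: subgroupM L_sub (XL X1) (subgroupM L_sub L0 (subgroupV L_sub Lg)).
have -> : g = c1 * (ginv c1 * (g * c0)) * ginv c0.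
  by rewrite gmulVK -gmulA gmulVr gmul1r.
have X0 : X c0 by apply: repsX => //; apply: subgroupVr.
exact: subgroupM (subgroupM X_sub (repsX _ rc1 L1) X1) (subgroupV X_sub X0).
Qed.

End Schreier.

Section Ultimately.
Variables (d : Order.disp_t) (I : orderType d) (i0 : I).
Implicit Types Q : I -> Prop.

Definition ultimately Q := exists i, forall j, (i <= j)%O -> Q j.

Lemma ultimately_mono Q Q' : (forall j, Q j -> Q' j) -> ultimately Q -> ultimately Q'.
Proof. by move=> QQ' [i Qi]; exists i => j /Qi /QQ'. Qed.

Lemma ultimately_and Q Q' : ultimately Q -> ultimately Q' -> ultimately (fun j => Q j /\ Q' j).
Proof.
move=> [a Qa] [b Qb]; exists (Order.max a b) => j; rewrite ge_max => /andP[aj bj].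
by split; [apply: Qa | apply: Qb].
Qed.

Lemma ultimately_all (T : Type) (s : seq T) (Q : T -> I -> Prop) :
  (forall x, List.In x s -> ultimately (Q x)) ->
  ultimately (fun j => forall x, List.In x s -> Q x j).
Proof.
elim: s => [|y s IHs] Qs; first by exists i0 => j _ x [].
have := ultimately_and (Qs y (or_introl erefl)) (IHs (fun x sx => Qs x (or_intror sx))).
by apply: ultimately_mono => j [Qy Q'] x [<- | /Q'].
Qed.

Lemma ultimately_impl (P : Prop) Q : (P -> ultimately Q) -> ultimately (fun j => P -> Q j).
Proof.
case: (pselect P) => [/[swap]/[apply] | nP _]; first exact: ultimately_mono.
by exists i0 => j _ /nP.
Qed.

Lemma limsup_I_le_ultimately (R : realType) (a : I -> \bar R) (x : \bar R) :
  ultimately (fun j => (a j <= x)%E) -> (limsup_I a <= x)%E.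
Proof.
case=> i ax; apply: le_trans (ereal_inf_lbound _) _; first by exists i.
by apply: ge_ereal_sup => _ [j /= ij <-]; apply: ax.
Qed.

(* A finite-index subgroup of a finitely generated group is finitely generated
   (Schreier), so elementwise eventual membership becomes uniform. *)
Lemma schreier_ultimately (A : grp) (L : A -> Prop) (M : I -> A -> Prop) (reps : seq A) :
  fin_generated A -> is_subgroup L ->
  (forall g, exists2 c, List.In c reps & L (gmul (ginv c) g)) ->
  (forall j, is_subgroup (M j)) -> (forall j x, M j x -> L x) ->
  (forall x, L x -> ultimately (fun j => M j x)) ->
  ultimately (fun j => forall x, L x -> M j x).
Proof.
move=> [gens gensP] L_sub reps_cover M_sub ML LM.
have perm g : ultimately (fun j => maps_rep_cosets reps (M j) g).
  apply: ultimately_all => c _; have [c' rc' Lc'] := reps_cover (gmul g c).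
  by apply: ultimately_mono (LM _ Lc') => j Mj; exists c'.
have gens_perm := ultimately_all
  (fun t (_ : List.In t gens) => ultimately_and (perm t) (perm (ginv t))).
have reps_in := ultimately_all
  (fun c (_ : List.In c reps) => ultimately_impl (@LM c)).
apply: ultimately_mono (ultimately_and gens_perm reps_in) => j [pj rj].
exact: schreier_subG gensP L_sub (M_sub j) (ML j) reps_cover pj rj.
Qed.

End Ultimately.

Section DirectLimit.
Unset Implicit Arguments.
Variables (d : Order.disp_t) (I : orderType d) (i0 : I).
Hypothesis le0i : forall i : I, (i0 <= i)%O.
Variables (G : I -> grp) (pi : forall i j : I, G i -> G j).
Hypothesis G_sys : surj_direct_system pi.
Variables (Ginf : grp) (iota : forall i, G i -> Ginf).
Hypothesis G_lim : is_direct_limit pi iota.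
Set Implicit Arguments.

Lemma pi_hom i j : (i <= j)%O -> is_hom (pi i j).
Proof. by case: G_sys => pi_hom _; apply: pi_hom. Qed.

Lemma pi_surj i j : (i <= j)%O -> forall y : G j, exists x, pi i j x = y.
Proof. by case: G_sys => _ [pi_surj _]; apply: pi_surj. Qed.

Lemma pi_id i (x : G i) : pi i i x = x.
Proof. by case: G_sys => _ [_ [pi_id _]]; apply: pi_id. Qed.

Lemma pi_comp i j k (x : G i) : (i <= j)%O -> (j <= k)%O -> pi j k (pi i j x) = pi i k x.
Proof. by case: G_sys => _ [_ [_ pi_comp]] ij jk; apply: pi_comp. Qed.

Lemma iota_hom i : is_hom (iota i).
Proof. by case: G_lim => iota_hom _; apply: iota_hom. Qed.

Lemma iota_pi i j (x : G i) : (i <= j)%O -> iota j (pi i j x) = iota i x.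
Proof. by case: G_lim => _ [iota_pi _] ij; apply: iota_pi. Qed.

Definition vanishes (a : G i0) := exists j, pi i0 j a = gone (G j).

Lemma pi_trivial_ge (a : G i0) j k :
  pi i0 j a = gone (G j) -> (j <= k)%O -> pi i0 k a = gone (G k).
Proof. by move=> aj jk; rewrite -(pi_comp a (le0i j) jk) aj (hom1 (pi_hom jk)). Qed.

Lemma vanishes_normal : is_normal vanishes.
Proof.
have pi0_hom j := pi_hom (le0i j).
split; [split; [|split] |].
- by exists i0; rewrite (hom1 (pi0_hom i0)).
- move=> x y [j xj] [k yk]; exists (Order.max j k).
  have [jm km] : (j <= Order.max j k)%O /\ (k <= Order.max j k)%O.
    by rewrite !le_max !lexx orbT.
  by rewrite pi0_hom (pi_trivial_ge xj jm) (pi_trivial_ge yk km) gmul1l.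
- by move=> x [j xj]; exists j; rewrite (homV (pi0_hom j)) xj ginv1.
- by move=> x g [j xj]; exists j; rewrite !pi0_hom xj gmul1l (homV (pi0_hom j)) gmulVl.
Qed.

Local Notation Q := (quot_grp vanishes_normal).
Local Notation qproj0 := (qproj vanishes).

Lemma qproj0_pi i (a b : G i0) : pi i0 i a = pi i0 i b -> qproj0 a = qproj0 b.
Proof.
move=> ab; apply/(qproj_eq vanishes_normal); exists i.
by rewrite (pi_hom (le0i i)) (homV (pi_hom (le0i i))) ab gmulVl.
Qed.

(* The direct limit of the G i is G i0 / vanishes: the compatible maps
   x |-> qproj0 (any preimage of x in G i0) induce u : Ginf -> Q. *)
Lemma iota0_quot : exists2 u : Ginf -> Q, is_hom u & forall a, u (iota i0 a) = qproj0 a.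
Proof.
pose lift i := projT1 (choice (pi_surj (le0i i))).
have liftK i x : pi i0 i (lift i x) = x := projT2 (choice (pi_surj (le0i i))) x.
pose f i (x : G i) : Q := qproj0 (lift i x).
have f_hom i : is_hom (@f i).
  move=> x y; rewrite /f -(qproj_hom vanishes_normal); apply: (qproj0_pi (i := i)).
  by rewrite (pi_hom (le0i i)) !liftK.
have f_pi i j : (i <= j)%O -> forall x, f j (pi i j x) = f i x.
  move=> ij x; apply: (qproj0_pi (i := j)).
  by rewrite liftK -(pi_comp _ (le0i i) ij) liftK.
case: G_lim => _ [_ /(_ Q f f_hom f_pi)] [u [u_hom [u_iota _]]].
exists u => // a; rewrite u_iota; apply: (qproj0_pi (i := i0)).
by rewrite liftK pi_id.
Qed.

Lemma iota0_ker (a : G i0) : iota i0 a = gone Ginf -> vanishes a.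
Proof.
have [u u_hom u_iota] := iota0_quot.
move=> /(congr1 u); rewrite u_iota (hom1 u_hom) => /esym /(qproj_eq vanishes_normal).
by rewrite ginv1 gmul1l.
Qed.

Lemma iota0_surj (y : Ginf) : exists a, iota i0 a = y.
Proof.
have [u u_hom u_iota] := iota0_quot.
pose g (z : Q) := iota i0 (qrepr z).
have g_proj a : g (qproj0 a) = iota i0 a.
  have /(qproj_eq vanishes_normal) [j aj] : qproj0 (qrepr (qproj0 a)) = qproj0 a by rewrite qreprK.
  apply: (gmulIl (x := ginv (g (qproj0 a)))); rewrite gmulVl -(homV (iota_hom (i := i0))).
  by rewrite -iota_hom -(iota_pi _ (le0i j)) aj (hom1 (iota_hom (i := j))).
have g_hom : is_hom g.
  move=> z w; case: (qproj_surj z) (qproj_surj w) => a -> [b ->].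
  by rewrite /= (qprojM vanishes_normal) !g_proj iota_hom.
case: G_lim => _ [_ /(_ Ginf iota iota_hom (fun i j ij x => iota_pi x ij))] [v [_ [_ v_uniq]]].
have idv := v_uniq id (fun x y => erefl) (fun i x => erefl).
(* Both id and g \o u extend iota to Ginf, so they agree. *)
have guv : forall y, g (u y) = v y.
  apply: v_uniq => [x z | i x]; first by rewrite u_hom g_hom.
  have [a <-] := pi_surj (le0i i) x.
  by rewrite iota_pi // u_iota g_proj.
by exists (qrepr (u y)); rewrite [RHS]idv -guv.
Qed.

Lemma iota_surj j (y : Ginf) : exists x, iota j x = y.
Proof. by have [a <-] := iota0_surj y; exists (pi i0 j a); rewrite iota_pi. Qed.

Variables (p : nat) (H : Ginf -> Prop).
Hypothesis H_normal : is_normal H.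

Definition H0 (a : G i0) := H (iota i0 a).

Lemma H0_subgroup : is_subgroup H0.
Proof. exact: preim_subgroup (iota_hom (i := i0)) _ (proj1 H_normal). Qed.

(* If dp_span j s contains H0, then pi i0 j shows d_p(H_j) <= size s. *)
Definition dp_span (j : I) (s : seq (G i0)) : G i0 -> Prop :=
  gen (fun y => List.In y s \/ commpow p H0 y \/ pi i0 j y = gone (G j)).

Lemma dp_span_subH0 j s : (forall x, List.In x s -> H0 x) -> forall x, dp_span j s x -> H0 x.
Proof.
move=> sH0; apply: gen_subG H0_subgroup _ => y [/sH0 // | [/(commpow_subG H0_subgroup) // | yj]].
rewrite /H0 -(iota_pi _ (le0i j)) yj (hom1 (iota_hom (i := j))).
exact: subgroup1 (proj1 H_normal).
Qed.

Lemma dp_span_ultimately s :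
  (forall y, H y -> gen (fun z => List.In z (map (iota i0) s) \/ commpow p H z) y) ->
  forall x, H0 x -> ultimately (fun j => dp_span j s x).
Proof.
move=> Hgen x /Hgen.
case/(gen_image (iota_hom (i := i0)) (S := fun y => List.In y s \/ commpow p H0 y)).
  move=> z [/List.in_map_iff [y [yz sy]] | Hz]; first by exists y; first left.
  have lift_H w : H w -> exists2 a, H0 a & iota i0 a = w.
    by move=> Hw; have [a aw] := iota0_surj w; exists a; rewrite /H0 aw.
  by have [a ca az] := commpow_lift (iota_hom (i := i0)) lift_H Hz; exists a; first right.
move=> b b_gen bx.
have [j0 vj0] : vanishes (gmul (ginv b) x).
  by apply: iota0_ker; rewrite iota_hom (homV (iota_hom (i := i0))) bx gmulVl.
exists j0 => j j0j; rewrite -(gmulVK b x); apply: subgroupM (gen_subgroup _) _ _.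
  apply: gen_subG (gen_subgroup _) _ _ b_gen => y [sy | cy].
  by apply: mem_gen; left.
  by apply: mem_gen; right; left.
by apply: mem_gen; right; right; apply: pi_trivial_ge vj0 j0j.
Qed.

Lemma dp_le_preim j s (m : nat) :
  size s = m -> (forall x, List.In x s -> H0 x) -> (forall x, H0 x -> dp_span j s x) ->
  dp_le p (fun y : G j => H (iota j y)) m.
Proof.
move=> sz sH0 H0span; apply: dp_le_image (pi_hom (le0i j)) _ _ sz sH0 H0span.
  by move=> x; rewrite iota_pi.
move=> y Hy; have [x xy] := pi_surj (le0i j) y.
by exists x => //; rewrite /H0 -(iota_pi _ (le0i j)) xy.
Qed.

Lemma preim_dp_le_ultimately (n m : nat) :
  fin_generated (G i0) -> index_is H n -> dp_le p H m ->
  ultimately (fun j => dp_le p (fun y : G j => H (iota j y)) m).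
Proof.
move=> G0_fg [c [c_cover _]] [sH [sz [sHH sHgen]]].
have [s es] := lift_seq iota0_surj sH.
have [reps ereps] := lift_seq iota0_surj (map c (enum 'I_n)).
have sH0 x : List.In x s -> H0 x by move=> sx; apply: sHH; rewrite -es; apply: List.in_map.
have reps_cover g : exists2 r, List.In r reps & H0 (gmul (ginv r) g).
  have [k Hk] := c_cover (iota i0 g).
  have /List.in_map_iff [r [rk rr]] : List.In (c k) (map (iota i0) reps).
    by rewrite ereps; apply/List.in_map/In_mem; rewrite mem_enum.
  by exists r; rewrite // /H0 iota_hom (homV (iota_hom (i := i0))) rk.
have span_ult := @dp_span_ultimately s ltac:(by rewrite es).
have := schreier_ultimately i0 G0_fg H0_subgroup reps_cover
  (fun j => gen_subgroup _) (fun j => dp_span_subH0 sH0) span_ult.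
apply: ultimately_mono => j; apply: dp_le_preim sH0.
by rewrite -sz -es size_map.
Qed.

End DirectLimit.

Section RankGradient.
Variables (R : realType) (G : grp) (p : nat).
Implicit Type H : G -> Prop.
Local Open Scope ereal_scope.

Lemma dp_le_ub H m : dp_le p H m -> @dp G R p H <= (m%:R)%:E.
Proof. by move=> Hm; apply: ereal_inf_lbound; exists m. Qed.

Lemma dp_pinfty H : ~ (exists m, dp_le p H m) -> @dp G R p H = +oo.
Proof. by move=> nm; apply/ereal_inf_pinfty => x [m Hm _]; case: nm; exists m. Qed.

Lemma dp_attained H :
  (exists m, dp_le p H m) -> exists2 m, dp_le p H m & @dp G R p H = (m%:R)%:E.
Proof.
move=> [m0 Hm0]; have ex_mb : exists m, `[< dp_le p H m >] by exists m0; apply/asboolP.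
case: (ex_minnP ex_mb) => m /asboolP Hm m_min; exists m => //.
apply/le_anti; rewrite dp_le_ub //=.
apply: le_ereal_inf_tmp => _ [m' Hm' <-]; rewrite lee_fin ler_nat.
by apply: m_min; apply/asboolP.
Qed.

Lemma RG_le_dp_le H k m : is_normal H -> index_is H (p ^ k) -> dp_le p H m ->
  @RG G R p <= ((m%:R)%:E - 1) * (((p ^ k)%:R : R)^-1)%:E.
Proof.
move=> Hn Hi Hm; apply: le_trans (ereal_inf_lbound _) _; first by exists H, k.
by apply: lee_wpmul2r; [rewrite lee_fin invr_ge0 | apply: leeB => //; apply: dp_le_ub].
Qed.

Lemma le_RG x :
  (forall H k, is_normal H -> index_is H (p ^ k) ->
     x <= (@dp G R p H - 1) * (((p ^ k)%:R : R)^-1)%:E) ->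
  x <= @RG G R p.
Proof. by move=> xle; apply: le_ereal_inf_tmp => _ [H [k [Hn [Hi ->]]]]; apply: xle. Qed.

End RankGradient.

Unset Implicit Arguments.

Theorem lemma3p5 (R : realType) (d : Order.disp_t) (I : orderType d) (i0 : I)
    (Hi0 : forall i : I, (i0 <= i)%O)
    (G : I -> grp) (pi : forall i j : I, G i -> G j)
    (Gfg : forall i, fin_generated (G i))
    (Hsys : @surj_direct_system d I G pi)
    (Ginf : grp) (iota : forall i, G i -> Ginf)
    (Hlim : @is_direct_limit d I G pi Ginf iota)
    (p : nat) (hp : prime p) :
  (limsup_I (fun i => @RG (G i) R p) <= @RG Ginf R p)%E.
Proof.
apply: le_RG => H k Hn Hi.
case: (pselect (exists m, dp_le p H m)) => [/(dp_attained R) [m Hm ->] | /(dp_pinfty R) ->].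
  apply: limsup_I_le_ultimately.
  apply: ultimately_mono (preim_dp_le_ultimately Hi0 Hsys Hlim Hn (Gfg i0) Hi Hm) => j Hj.
  apply: RG_le_dp_le Hj.
    exact: preim_normal (iota_hom Hlim (i := j)) _ Hn.
  exact: preim_index (iota_hom Hlim (i := j)) (iota_surj Hi0 Hsys Hlim j) Hi.
by rewrite gt0_mulye ?leey // lte_fin invr_gt0 ltr0n expn_gt0 prime_gt0.
Qed.
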